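(* Let $W,V$ be subspaces of $\mathbb{R}^n$ with $\mathbb{R}^n=W\oplus V^\perp$, and let $\mu\in\mathcal{P}_2(W)$ be a probabilistic frame for $W$ with frame operator $\mathbf{S}_\mu$. A measurable map $T:W\to V$ is such that $T_\#\mu$ is an oblique dual probabilistic frame of $\mu$ on $V$ with respect to the coupling $(\mathbf{Id},T)_\#\mu$ (i.e. $T_\#\mu\in\mathcal{P}_2(V)$ and $\int_W\mathbf{x}\,T(\mathbf{x})^t\,d\mu(\mathbf{x})=\boldsymbol{\pi}_{WV^\perp}$) if and only if there is a measurable map $h:W\to V$ with $h_\#\mu\in\mathcal{P}_2(V)$ such that for all $\mathbf{x}\in W$, $$T(\mathbf{x})=\boldsymbol{\pi}_{VW^\perp}\mathbf{S}_\mu^\dagger\mathbf{x}+h(\mathbf{x})-\int_W\langle\mathbf{S}_\mu^\dagger\mathbf{x},\mathbf{y}\rangle\,h(\mathbf{y})\,d\mu(\mathbf{y}).$$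
   Context: $\mathcal{P}_2(S)$ denotes Borel probability measures on $\mathbb{R}^n$ concentrated on the subspace $S$ with finite second moment. $\mu\in\mathcal{P}_2(W)$ is a probabilistic frame for $W$ if there exist $0<A\le B<\infty$ with $A\|\mathbf{x}\|^2\le\int_W|\langle\mathbf{x},\mathbf{y}\rangle|^2d\mu(\mathbf{y})\le B\|\mathbf{x}\|^2$ for all $\mathbf{x}\in W$; its frame operator is $\mathbf{S}_\mu=\int_W\mathbf{y}\mathbf{y}^td\mu(\mathbf{y})$, and $\mathbf{S}_\mu^\dagger$ is its Moore–Penrose inverse. $T_\#\mu(E)=\mu(T^{-1}(E))$ and $(\mathbf{Id},T)_\#\mu$ is the pushforward of $\mu$ under $\mathbf{x}\mapsto(\mathbf{x},T(\mathbf{x}))$. $\boldsymbol{\pi}_{WV^\perp}$ is the oblique projection onto $W$ along $V^\perp$, and $\boldsymbol{\pi}_{VW^\perp}$ the oblique projection onto $V$ along $W^\perp$. $\nu\in\mathcal{P}_2(V)$ is an oblique dual probabilistic frame of $\mu$ on $V$ with respect to a coupling $\gamma$ of $\mu$ and $\nu$ if $\int_{W\times V}\mathbf{x}\mathbf{y}^t\,d\gamma(\mathbf{x},\mathbf{y})=\boldsymbol{\pi}_{WV^\perp}$. *)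

(* Points of R^n are row vectors
   'rV[R]_n; subspaces of R^n are row spaces of square matrices (mxalgebra).
   Matrices acting on vectors follow the paper's column convention via
   [colapp]. *)
From HB Require Import structures.
From mathcomp Require Import all_boot all_order all_algebra.
From mathcomp Require Import all_classical all_reals all_analysis.
Set Implicit Arguments. Unset Strict Implicit. Unset Printing Implicit Defensive.
Import Order.TTheory GRing.Theory Num.Theory.
Import numFieldNormedType.Exports.
Local Open Scope classical_set_scope.
Local Open Scope ring_scope.

Definition Rn (R : realType) (n : nat) := g_sigma_algebraType (@open 'rV[R]_n).

Definition vec (R : realType) (n : nat) (x : Rn R n) : 'rV[R]_n := x.

Definition dot (R : realType) (n : nat) (x y : 'rV[R]_n) : R :=
  \sum_(i < n) x 0 i * y 0 i.
Definition sqnorm (R : realType) (n : nat) (x : 'rV[R]_n) : R := dot x x.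

Definition inS (R : realType) (n : nat) (S : 'M[R]_n) : set (Rn R n) :=
  [set x | (vec x <= S)%MS].

Definition orthc (R : realType) (n : nat) (S : 'M[R]_n) : 'M[R]_n :=
  kermx S^T.

(* oblique projection onto W along V^perp, as a matrix acting on column
   vectors (pi_{W V^perp}) *)
Definition oproj (R : realType) (n : nat) (W V : 'M[R]_n) : 'M[R]_n :=
  (proj_mx W (orthc V))^T.

Definition colapp (R : realType) (n : nat) (M : 'M[R]_n) (x : 'rV[R]_n)
  : 'rV[R]_n := (M *m x^T)^T.

Definition penrose (R : realType) (n : nat) (A B : 'M[R]_n) : Prop :=
  [/\ A *m B *m A = A, B *m A *m B = B, (A *m B)^T = A *m B
    & (B *m A)^T = B *m A].
Definition mpinv (R : realType) (n : nat) (A : 'M[R]_n) : 'M[R]_n :=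
  xget 0 [set B | penrose A B].

Definition vint (R : realType) (n : nat) (mu : {measure set Rn R n -> \bar R})
  (f : Rn R n -> 'rV[R]_n) : 'rV[R]_n :=
  \row_(i < n) (\int[mu]_y (f y 0 i)).
Definition mxint (R : realType) (n : nat) (mu : {measure set Rn R n -> \bar R})
  (F : Rn R n -> 'M[R]_n) : 'M[R]_n :=
  \matrix_(i < n, j < n) (\int[mu]_y (F y i j)).

Definition frame_op (R : realType) (n : nat) (mu : {measure set Rn R n -> \bar R})
  : 'M[R]_n := mxint mu (fun y => (vec y)^T *m vec y).

Definition P2 (R : realType) (n : nat) (S : 'M[R]_n)
  (nu : set (Rn R n) -> \bar R) : Prop :=
  [/\ nu setT = 1%E, nu (~` inS S) = 0%E
    & (\int[nu]_x (sqnorm (vec x))%:E < +oo)%E].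

Definition pframe (R : realType) (n : nat) (W : 'M[R]_n)
  (mu : {measure set Rn R n -> \bar R}) : Prop :=
  exists A B : R, [/\ 0 < A, A <= B &
    forall x : Rn R n, inS W x ->
      ((A * sqnorm (vec x))%:E <= \int[mu]_y ((dot (vec x) (vec y)) ^+ 2)%:E)%E /\
      (\int[mu]_y ((dot (vec x) (vec y)) ^+ 2)%:E <= (B * sqnorm (vec x))%:E)%E].

From HB Require Import structures.
From mathcomp Require Import all_boot all_order all_algebra.
From mathcomp Require Import all_classical all_reals all_analysis.
From mathcomp Require Import measurable_realfun lra zify.
Set Implicit Arguments. Unset Strict Implicit. Unset Printing Implicit Defensive.
Import Order.TTheory GRing.Theory Num.Theory.
Import numFieldNormedType.Exports.
Local Open Scope classical_set_scope.
Local Open Scope ring_scope.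

(* Write S := S_mu and K_h := \int x h(x)^t dmu(x).  Since
   \int <S^+ x, y> h(y) dmu(y) = K_h^t S^+ x and pi_{VW^perp} = pi_{WV^perp}^t,
   the right-hand side of the formula is T_h(x) := (pi_{WV^perp} - K_h)^t S^+ x + h(x).
   For h := T the correction term vanishes exactly when K_T = pi_{WV^perp}.
   Conversely \int x T_h(x)^t dmu = S S^+ (pi_{WV^perp} - K_h) + K_h.  As mu is a
   frame for W concentrated on W, the range of S is exactly W, which contains the
   ranges of pi_{WV^perp} and K_h; S S^+ being the orthogonal projection onto the
   range of S, the integral is pi_{WV^perp}.  Finally T = T_h mu-a.e. *)

Section GramMatrix.
Variable R : realFieldType.

Lemma mulmx_trmx_self_eq0 m (v : 'rV[R]_m) : v *m v^T = 0 -> v = 0.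
Proof.
move=> /matrixP/(_ 0 0); rewrite !mxE => /eqP.
rewrite psumr_eq0 => [/allP vv0|i _]; last by rewrite mxE -expr2 sqr_ge0.
apply/rowP => i; have := vv0 i (mem_index_enum _).
by rewrite !mxE -expr2 sqrf_eq0 => /eqP.
Qed.

Lemma gram_unitmx r m (X : 'M[R]_(r, m)) : row_free X -> X *m X^T \in unitmx.
Proof.
move=> freeX; rewrite -row_free_unit; apply: inj_row_free => v.
rewrite mulmxA => vXX0; apply: (row_free_inj freeX); rewrite mul0mx.
by apply: mulmx_trmx_self_eq0; rewrite trmx_mul mulmxA vXX0 mul0mx.
Qed.

End GramMatrix.

Section MoorePenroseInverse.
Variable R : realType.

Lemma penrose_full_rank_factor m r (C : 'M[R]_(m, r)) (F : 'M[R]_(r, m)) :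
  row_free F -> row_free C^T ->
  penrose (C *m F) (F^T *m (invmx (F *m F^T) *m (invmx (C^T *m C) *m C^T))).
Proof.
move=> freeF freeCt.
have uF := gram_unitmx freeF.
have uC := gram_unitmx freeCt; rewrite trmxK in uC.
set G1 := invmx (F *m F^T); set G2 := invmx (C^T *m C).
have G1T : G1^T = G1 by rewrite /G1 trmx_inv trmx_mul trmxK.
have G2T : G2^T = G2 by rewrite /G2 trmx_inv trmx_mul trmxK.
have FG1K p (X : 'M[R]_(r, p)) : F *m (F^T *m (G1 *m X)) = X.
  by rewrite !mulmxA mulmxV // mul1mx.
have G1FK p (X : 'M[R]_(r, p)) : G1 *m (F *m (F^T *m X)) = X.
  by rewrite [F *m _]mulmxA mulmxA mulVmx // mul1mx.
have G2CK p (X : 'M[R]_(r, p)) : G2 *m (C^T *m (C *m X)) = X.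
  by rewrite [C^T *m _]mulmxA mulmxA mulVmx // mul1mx.
have AB : C *m F *m (F^T *m (G1 *m (G2 *m C^T))) = C *m (G2 *m C^T).
  by rewrite -!mulmxA FG1K.
have BA : F^T *m (G1 *m (G2 *m C^T)) *m (C *m F) = F^T *m (G1 *m F).
  by rewrite -!mulmxA G2CK.
split.
- by rewrite AB -!mulmxA G2CK.
- by rewrite BA -!mulmxA G1FK.
- by rewrite AB !trmx_mul trmxK G2T -!mulmxA.
- by rewrite BA !trmx_mul trmxK G1T -!mulmxA.
Qed.

Lemma mpinvP n (A : 'M[R]_n) : penrose A (mpinv A).
Proof.
apply: xgetPex; rewrite -(mulmx_base A); eexists.
apply: penrose_full_rank_factor; first exact: row_base_free.
by rewrite /row_free mxrank_tr; exact: col_base_full.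
Qed.

Lemma sym_penrose_mulmxK n (S B Z : 'M[R]_n) : S^T = S -> penrose S B ->
  (Z^T <= S)%MS -> S *m (B^T *m Z) = Z.
Proof.
move=> ST [SBS _ _ BST] /submxP[Y ZE].
have -> : Z = S *m Y^T by rewrite -[Z]trmxK ZE trmx_mul ST.
have SBt : S *m B^T = B *m S by rewrite -BST trmx_mul ST.
have SBtS : S *m B^T *m S = S.
  by rewrite -{1 2}ST -trmx_mul -trmx_mul mulmxA SBS ST.
by rewrite mulmxA SBt mulmxA -SBt SBtS.
Qed.

End MoorePenroseInverse.

Section OrthogonalComplement.
Variables (R : realFieldType) (n : nat).

Lemma mulmx_orth m1 m2 p (U : 'M[R]_(m1, n)) (A : 'M[R]_(p, n)) (X : 'M[R]_(m2, n)) :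
  (U <= A)%MS -> (X <= kermx A^T)%MS -> U *m X^T = 0.
Proof.
move=> /submxP[D ->] /sub_kermxP XA0.
by rewrite -mulmxA -[A *m X^T]trmxK trmx_mul trmxK XA0 trmx0 mulmx0.
Qed.

Lemma proj_mx_unique (U V M : 'M[R]_n) :
  (U :&: V = 0)%MS -> row_full (U + V)%MS ->
  U *m M = U -> V *m M = 0 -> M = proj_mx U V.
Proof.
move=> capUV fullUV UM VM; apply: (@row_full_inj _ _ _ _ (col_mx U V)).
  by rewrite -sub1mx -addsmxE sub1mx.
by rewrite !mul_col_mx UM VM proj_mx_id ?proj_mx_0.
Qed.

Lemma capmx_kermx0_submx (W S : 'M[R]_n) :
  (S <= W)%MS -> (W :&: kermx S = 0)%MS -> (W <= S)%MS.
Proof.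
move=> sSW capWS0.
have rankWS : \rank (W *m S) = \rank W.
  by have := mxrank_mul_ker W S; rewrite capWS0 mxrank0 addn0.
have [_ <-] := mxrank_leqif_sup sSW.
by rewrite eqn_leq (mxrankS sSW) -rankWS mxrankS ?submxMl.
Qed.

Variables (W V : 'M[R]_n).
Hypotheses (capWV : (W :&: kermx V^T = 0)%MS) (fullWV : row_full (W + kermx V^T)%MS).

Let rank_eq : \rank W = \rank V.
Proof.
have := mxrank_sum_cap W (kermx V^T); rewrite capWV mxrank0 addn0 (eqP fullWV).
rewrite mxrank_ker mxrank_tr; have := rank_leq_row V; lia.
Qed.

Lemma capmx_orth_swap : (V :&: kermx W^T = 0)%MS.
Proof.
apply/eqP/rowV0P => d; rewrite sub_capmx => /andP[dV dWp].
have [[a b] /= dE] := sub_addsmxP (submx_full d fullWV).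
(* d is orthogonal to both components of its decomposition in W + V^perp. *)
apply: mulmx_trmx_self_eq0.
rewrite {2}dE linearD /= (trmx_mul a) (trmx_mul b) mulmxDr !mulmxA (sub_kermxP dWp).
by rewrite (mulmx_orth dV (submx_refl (kermx V^T))) !mul0mx addr0.
Qed.

Lemma row_full_orth_swap : row_full (V + kermx W^T)%MS.
Proof.
apply/eqP; have := mxrank_sum_cap V (kermx W^T).
rewrite capmx_orth_swap mxrank0 addn0 mxrank_ker mxrank_tr => ->.
have := rank_leq_row W; have := rank_eq; lia.
Qed.

Lemma trmx_proj_orth : (proj_mx W (kermx V^T))^T = proj_mx V (kermx W^T).
Proof.
set P := proj_mx W _; have PW : (P <= W)%MS by rewrite -[P]mul1mx proj_mx_sub.
apply: proj_mx_unique; [exact: capmx_orth_swap | exact: row_full_orth_swap | |].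
- have := proj_mx_compl_sub (submx_full 1%:M fullWV); rewrite mul1mx => compl.
  have := mulmx_orth (submx_refl V) compl.
  by rewrite linearB /= trmx1 mulmxBr mulmx1 => /eqP; rewrite subr_eq0 eq_sym => /eqP.
- by apply: trmx_inj; rewrite trmx_mul trmxK trmx0 (mulmx_orth PW (submx_refl _)).
Qed.

End OrthogonalComplement.

Section SquaredNorm.
Variables (R : realType) (n : nat).
Implicit Types u v : 'rV[R]_n.

Lemma outer_mxE u v i j : (u^T *m v) i j = u 0 i * v 0 j.
Proof. by rewrite !mxE big_ord1 !mxE. Qed.

Lemma sqnormE v : sqnorm v = (v *m v^T) 0 0.
Proof. by rewrite mxE; apply: eq_bigr => i _; rewrite mxE. Qed.

Lemma sqnorm_ge0 v : 0 <= sqnorm v.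
Proof. by apply: sumr_ge0 => i _; rewrite -expr2 sqr_ge0. Qed.

Lemma sqnorm_eq0 v : sqnorm v = 0 -> v = 0.
Proof.
move=> v0; apply: mulmx_trmx_self_eq0; apply/matrixP => i j.
by rewrite !ord1 -sqnormE v0 mxE.
Qed.

Lemma sqr_coord_le_sqnorm v i : v 0 i ^+ 2 <= sqnorm v.
Proof.
rewrite /sqnorm /dot (bigD1 i) //= expr2 lerDl.
by apply: sumr_ge0 => j _; rewrite -expr2 sqr_ge0.
Qed.

End SquaredNorm.

Section SquareIntegrable.
Context d (T : measurableType d) (R : realType) (mu : {measure set T -> \bar R}).
Local Notation integrableR f := (mu.-integrable setT (EFin \o f)).
Implicit Types f g : T -> R.

Definition sqintegrable f :=
  measurable_fun setT f /\ integrableR (fun x => f x ^+ 2).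

Lemma integrableR_mul f g :
  sqintegrable f -> sqintegrable g -> integrableR (fun x => f x * g x).
Proof.
move=> [mf if2] [mg ig2].
apply: le_integrable (integrableD _ if2 ig2) => //.
  by apply/measurable_EFinP; exact: measurable_funM.
move=> x _ /=; rewrite lee_fin (ger0_norm (addr_ge0 (sqr_ge0 _) (sqr_ge0 _))) ler_norml.
by move: (f x) (g x) => a b; apply/andP; split; nra.
Qed.

Lemma sqintegrableD f g :
  sqintegrable f -> sqintegrable g -> sqintegrable (fun x => f x + g x).
Proof.
move=> [mf if2] [mg ig2]; split; first exact: measurable_funD.
apply: le_integrable (integrableZl measurableT 2 (integrableD _ if2 ig2)) => //.
  by apply/measurable_EFinP; apply: measurable_funX; exact: measurable_funD.
move=> x _ /=; rewrite lee_fin ger0_norm ?sqr_ge0 // ger0_norm; last first.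
  by rewrite mulr_ge0 ?addr_ge0 ?sqr_ge0.
by move: (f x) (g x) => a b; have := sqr_ge0 (a - b); nra.
Qed.

Lemma sqintegrableZ k f : sqintegrable f -> sqintegrable (fun x => k * f x).
Proof.
move=> [mf if2]; split; first by apply: measurable_funM => //; exact: measurable_cst.
apply: eq_integrable (integrableZl measurableT (k ^+ 2) if2) => // x _ /=.
by rewrite -EFinM exprMn.
Qed.

Lemma sqintegrable_sum (I : Type) (s : seq I) (F : I -> T -> R) :
  (forall i, sqintegrable (F i)) -> sqintegrable (fun x => \sum_(i <- s) F i x).
Proof.
move=> sqF; elim: s => [|i s IHs].
  under eq_fun do rewrite big_nil.
  split; first exact: measurable_cst.
  by under eq_fun do rewrite expr0n /=; exact: integrable0.
by under eq_fun do rewrite big_cons; exact: sqintegrableD.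
Qed.

Lemma integrableR_sum (I : Type) (s : seq I) (F : I -> T -> R) :
  (forall i, integrableR (F i)) -> integrableR (fun x => \sum_(i <- s) F i x).
Proof.
move=> intF; apply: eq_integrable (integrable_sum measurableT s (fun i _ => intF i)) => // x _.
by rewrite /= sumEFin.
Qed.

Lemma Rintegral_sum (I : Type) (s : seq I) (F : I -> T -> R) :
  (forall i, integrableR (F i)) ->
  \int[mu]_x (\sum_(i <- s) F i x) = \sum_(i <- s) \int[mu]_x F i x.
Proof.
move=> intF; elim: s => [|i s IHs].
  by under eq_fun do rewrite big_nil; rewrite big_nil Rintegral_cst // mul0r.
under eq_fun do rewrite big_cons.
by rewrite RintegralD ?IHs ?big_cons //; exact: integrableR_sum.
Qed.

Lemma integrableRZl k f : integrableR f -> integrableR (fun x => k * f x).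
Proof.
by move=> intf; apply: eq_integrable (integrableZl measurableT k intf) => // x _.
Qed.

Lemma Rintegral_lincomb (I : Type) (s : seq I) (c : I -> R) (F : I -> T -> R) :
  (forall i, integrableR (F i)) ->
  \int[mu]_x (\sum_(i <- s) c i * F i x) = \sum_(i <- s) c i * \int[mu]_x F i x.
Proof.
move=> intF; rewrite Rintegral_sum => [|i]; last exact: integrableRZl.
by apply: eq_bigr => i _; rewrite RintegralZl.
Qed.

Lemma conull_ae_eq (A : set T) (U : Type) (f g : T -> U) :
  measurable A -> mu (~` A) = 0%E -> {in A, f =1 g} -> ae_eq mu setT f g.
Proof.
move=> mA A0 fg; exists (~` A); split => //; first exact: measurableC.
by move=> x /= fgx Ax; apply: fgx => _; rewrite fg ?inE.
Qed.

Lemma eq_Rintegral_conull (A : set T) f g :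
  measurable A -> mu (~` A) = 0%E -> measurable_fun setT f -> measurable_fun setT g ->
  {in A, f =1 g} -> \int[mu]_x f x = \int[mu]_x g x.
Proof.
move=> mA A0 mf mg fg; congr fine; apply: ae_eq_integral => //.
- exact/measurable_EFinP.
- exact/measurable_EFinP.
by apply: conull_ae_eq mA A0 _ => x Ax /=; rewrite fg.
Qed.

End SquareIntegrable.

Section SquareIntegrableVector.
Context d (T : measurableType d) (R : realType) (mu : {measure set T -> \bar R}).
Variable n : nat.
Implicit Types F G : T -> 'rV[R]_n.

Definition sqintegrable_rV F := forall i, sqintegrable mu (fun x => F x 0 i).

Lemma sqintegrable_rVD F G : sqintegrable_rV F -> sqintegrable_rV G ->
  sqintegrable_rV (fun x => F x + G x).
Proof. by move=> sqF sqG i; under eq_fun do rewrite mxE; exact: sqintegrableD. Qed.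

Lemma sqintegrable_rV_mulmx F (C : 'M[R]_n) :
  sqintegrable_rV F -> sqintegrable_rV (fun x => F x *m C).
Proof.
move=> sqF j; under eq_fun do rewrite mxE.
by apply: sqintegrable_sum => k; under eq_fun do rewrite mulrC; exact: sqintegrableZ.
Qed.

Lemma sqintegrable_dot z F : sqintegrable_rV F -> sqintegrable mu (fun x => dot z (F x)).
Proof. by move=> sqF; apply: sqintegrable_sum => i; exact: sqintegrableZ. Qed.

Lemma measurable_sqnorm F : (forall i, measurable_fun setT (fun x => F x 0 i)) ->
  measurable_fun setT (fun x => sqnorm (F x)).
Proof. by move=> mF; apply: measurable_sum => i; exact: measurable_funM. Qed.

Lemma sqintegrable_rV_sqnorm F : (forall i, measurable_fun setT (fun x => F x 0 i)) ->
  (\int[mu]_x (sqnorm (F x))%:E < +oo)%E -> sqintegrable_rV F.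
Proof.
move=> mF finF i; split; first exact: mF.
have intF : mu.-integrable setT (EFin \o (fun x => sqnorm (F x))).
  apply/integrableP; split; first by apply/measurable_EFinP; exact: measurable_sqnorm.
  by under eq_integral do rewrite /= (ger0_norm (sqnorm_ge0 _)).
apply: le_integrable intF => //; first by apply/measurable_EFinP; exact: measurable_funX.
move=> x _ /=; rewrite lee_fin !ger0_norm ?sqr_ge0 ?sqnorm_ge0 //.
exact: sqr_coord_le_sqnorm.
Qed.

Lemma sqnorm_integral_lty F : sqintegrable_rV F -> (\int[mu]_x (sqnorm (F x))%:E < +oo)%E.
Proof.
move=> sqF; have /integrableP[_] : mu.-integrable setT (EFin \o (fun x => sqnorm (F x))).
  by apply: integrableR_sum => i; exact: integrableR_mul.
by under eq_integral do rewrite /= (ger0_norm (sqnorm_ge0 _)).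
Qed.

Lemma sqintegrable_rV_conull (A : set T) F G : measurable A -> mu (~` A) = 0%E ->
  (forall i, measurable_fun setT (fun x => F x 0 i)) -> sqintegrable_rV G ->
  {in A, F =1 G} -> sqintegrable_rV F.
Proof.
move=> mA A0 mF sqG FG i; split => //.
have [mGi /integrableP[_ finG]] := sqG i.
apply/integrableP; split; first by apply/measurable_EFinP; exact: measurable_funX.
rewrite (ae_eq_integral (fun x => `|(G x 0 i ^+ 2)%:E|)%E) //.
- by apply: measurableT_comp => //; apply/measurable_EFinP; exact: measurable_funX.
- by apply: measurableT_comp => //; apply/measurable_EFinP; exact: measurable_funX.
- by apply: conull_ae_eq mA A0 _ => x Ax /=; rewrite FG.
Qed.

End SquareIntegrableVector.

Section EuclideanSpace.
Variables (R : realType) (n : nat).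
Local Notation Rn := (Rn R n).

Lemma measurable_vec_coord i : measurable_fun setT (fun x : Rn => vec x 0 i).
Proof.
apply: (measurability _ (RGenOpens.measurableE R)).
move=> _ [_ [a [b ->]] <-]; rewrite setTI; apply: sub_sigma_algebra.
have oab : open (`]a, b[%classic : set R) by exact: interval_open.
exact: (proj1 (continuousP (fun x : 'rV[R]_n => x 0 i)) (@coord_continuous R 1 n 0 i) _ oab).
Qed.

Lemma measurable_vec_mulmx (C : 'M[R]_n) j :
  measurable_fun setT (fun x : Rn => (vec x *m C) 0 j).
Proof.
under eq_fun do rewrite mxE.
apply: measurable_sum => k.
by apply: measurable_funM; [exact: measurable_vec_coord | exact: measurable_cst].
Qed.

Lemma measurable_inS (S : 'M[R]_n) : measurable (inS S).
Proof.
have -> : inS S = (fun x : Rn => sqnorm (vec x *m cokermx S)) @^-1` [set 0].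
  apply/seteqP; split => x /=.
  - by rewrite /inS /= submxE => /eqP ->; rewrite /sqnorm /dot big1 // => i _; rewrite mxE mul0r.
  - by move=> /sqnorm_eq0 x0; rewrite /inS /= submxE x0.
rewrite -[_ @^-1` _]setTI; apply: measurable_sqnorm => //.
exact: measurable_vec_mulmx.
Qed.

Lemma P2_sqintegrable (S : 'M[R]_n) (nu : {measure set Rn -> \bar R}) :
  P2 S nu -> sqintegrable_rV nu (fun x => vec x).
Proof. by case=> _ _; apply: sqintegrable_rV_sqnorm; exact: measurable_vec_coord. Qed.

Lemma P2_pushforward_sqintegrable (S : 'M[R]_n) (mu : {measure set Rn -> \bar R})
    (h : Rn -> Rn) :
  measurable_fun setT h -> P2 S (pushforward mu h) ->
  sqintegrable_rV mu (fun x => vec (h x)).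
Proof.
move=> mh [_ _ finh]; apply: sqintegrable_rV_sqnorm.
  by move=> i; exact: measurableT_comp (measurable_vec_coord i) mh.
rewrite ge0_integral_pushforward // in finh.
- by apply/measurable_EFinP; apply: measurable_sqnorm; exact: measurable_vec_coord.
- by move=> y _; rewrite lee_fin sqnorm_ge0.
Qed.

Lemma pushforward_P2 (W V : 'M[R]_n) (mu : probability Rn R) (h : Rn -> Rn) :
  measurable_fun setT h -> P2 W mu -> (forall x, inS W x -> inS V (h x)) ->
  sqintegrable_rV mu (fun x => vec (h x)) -> P2 V (pushforward mu h).
Proof.
move=> mh [mu1 muW0 _] hWV sqh; split.
- by rewrite /pushforward preimage_setT.
- rewrite /pushforward; apply: subset_measure0 muW0.
  + by rewrite -[X in measurable X]setTI; apply: mh => //; exact: measurableC (measurable_inS _).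
  + exact: measurableC (measurable_inS _).
  + by move=> x /= hxV xW; apply/hxV/hWV.
- rewrite ge0_integral_pushforward //; first exact: sqnorm_integral_lty.
  + by apply/measurable_EFinP; apply: measurable_sqnorm; exact: measurable_vec_coord.
  + by move=> y _; rewrite lee_fin sqnorm_ge0.
Qed.

End EuclideanSpace.

Section Moments.
Variables (R : realType) (n : nat) (mu : {measure set Rn R n -> \bar R}).
Local Notation moment f g := (mxint mu (fun x => (f x)^T *m g x)).
Local Notation sqint f := (sqintegrable_rV mu f).
Implicit Types f g : Rn R n -> 'rV[R]_n.

Lemma mulmx_moment z f g : sqint f -> sqint g ->
  z *m moment f g = vint mu (fun x => dot z (f x) *: g x).
Proof.
move=> sqf sqg; apply/rowP => j; rewrite !mxE.
rewrite [RHS](@eq_Rintegral _ _ _ mu _ (fun x => \sum_i z 0 i * (f x 0 i * g x 0 j))); last first.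
  by move=> x _; rewrite !mxE /dot mulr_suml; apply: eq_bigr => i _; rewrite mulrA.
rewrite Rintegral_lincomb => [|i]; last exact: integrableR_mul.
by apply: eq_bigr => i _; rewrite mxE; congr (_ * _); apply: eq_Rintegral => x _; rewrite outer_mxE.
Qed.

Lemma moment_mulmxr (C : 'M[R]_n) f g : sqint f -> sqint g ->
  moment f g *m C = moment f (fun x => g x *m C).
Proof.
move=> sqf sqg; apply/matrixP => i j; rewrite !mxE.
rewrite [RHS](@eq_Rintegral _ _ _ mu _ (fun x => \sum_k C k j * (f x 0 i * g x 0 k))); last first.
  by move=> x _; rewrite outer_mxE mxE mulr_sumr; apply: eq_bigr => k _; rewrite mulrA mulrC.
rewrite Rintegral_lincomb => [|k]; last exact: integrableR_mul.
apply: eq_bigr => k _; rewrite mxE mulrC; congr (_ * _).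
by apply: eq_Rintegral => x _; rewrite outer_mxE.
Qed.

Lemma moment_addr f g1 g2 : sqint f -> sqint g1 -> sqint g2 ->
  moment f (fun x => g1 x + g2 x) = moment f g1 + moment f g2.
Proof.
move=> sqf sqg1 sqg2; apply/matrixP => i j; rewrite !mxE.
under eq_Rintegral do rewrite outer_mxE mxE mulrDr.
rewrite RintegralD //; try exact: integrableR_mul.
by congr (_ + _); apply: eq_Rintegral => x _; rewrite outer_mxE.
Qed.

Lemma trmx_moment f g : (moment f g)^T = moment g f.
Proof.
apply/matrixP => i j; rewrite !mxE.
by apply: eq_Rintegral => x _; rewrite !outer_mxE mulrC.
Qed.

Lemma moment_conullr (A : set (Rn R n)) f g g' : measurable A -> mu (~` A) = 0%E ->
  sqint f -> (forall i, measurable_fun setT (fun x => g x 0 i)) ->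
  (forall i, measurable_fun setT (fun x => g' x 0 i)) ->
  {in A, g =1 g'} -> moment f g = moment f g'.
Proof.
move=> mA A0 sqf mg mg' gg'; apply/matrixP => i j; rewrite !mxE.
apply: (eq_Rintegral_conull mA A0).
- by under eq_fun do rewrite outer_mxE; exact: measurable_funM (sqf i).1 (mg j).
- by under eq_fun do rewrite outer_mxE; exact: measurable_funM (sqf i).1 (mg' j).
- by move=> x Ax; rewrite !outer_mxE gg'.
Qed.

Lemma moment_quad z f : sqint f ->
  (z *m moment f f *m z^T) 0 0 = \int[mu]_x (dot z (f x) ^+ 2).
Proof.
move=> sqf; rewrite mulmx_moment // mxE.
rewrite [RHS](@eq_Rintegral _ _ _ mu _ (fun x => \sum_j z 0 j * (dot z (f x) * f x 0 j))); last first.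
  move=> x _; rewrite expr2 [X in _ * X]/dot mulr_sumr.
  by apply: eq_bigr => j _; rewrite mulrCA.
rewrite Rintegral_lincomb => [|j]; last by apply: integrableR_mul => //; exact: sqintegrable_dot.
apply: eq_bigr => j _; rewrite !mxE mulrC; congr (_ * _).
by apply: eq_Rintegral => x _; rewrite mxE.
Qed.

Lemma moment_sub (A : 'M[R]_n) f : mu (~` inS A) = 0%E ->
  sqint f -> sqint (fun x => vec x) -> (moment f (fun x => vec x) <= A)%MS.
Proof.
move=> A0 sqf sqx; rewrite submxE moment_mulmxr //.
rewrite (moment_conullr (g' := fun=> 0) (measurable_inS A) A0) //.
- apply/eqP/matrixP => i j; rewrite !mxE.
  by under eq_Rintegral do rewrite mulmx0 mxE; rewrite Rintegral_cst // mul0r.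
- exact: measurable_vec_mulmx.
- by move=> x /[!in_setE]; rewrite /inS /= submxE => /eqP.
Qed.

End Moments.

Section FrameOperator.
Variables (R : realType) (n : nat) (W : 'M[R]_n) (mu : {measure set Rn R n -> \bar R}).
Hypotheses (muW : P2 W mu) (frameW : pframe W mu).
Local Notation moment f g := (mxint mu (fun x => (f x)^T *m g x)).

Lemma frame_op_sub : (frame_op mu <= W)%MS.
Proof.
have sqx := P2_sqintegrable muW; case: muW => _ muW0 _.
exact: moment_sub.
Qed.

Lemma sub_frame_op : (W <= frame_op mu)%MS.
Proof.
have sqx := P2_sqintegrable muW.
apply: capmx_kermx0_submx frame_op_sub _.
apply/eqP/rowV0P => w; rewrite sub_capmx => /andP[wW /sub_kermxP wS0].
(* \int <w, y>^2 dmu = w S w^T = 0, which the lower frame bound forbids unless w = 0. *)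
have [A [B [A0 _ /(_ w wW)[lowerA _]]]] := frameW.
have intw : mu.-integrable setT (EFin \o (fun y => dot w (vec y) ^+ 2)).
  by under eq_fun do rewrite expr2; apply: integrableR_mul; exact: sqintegrable_dot.
apply: sqnorm_eq0; apply/eqP; rewrite eq_le sqnorm_ge0 andbT -(pmulr_rle0 _ A0).
rewrite -lee_fin (le_trans lowerA) //.
rewrite -[X in (X <= _)%E]fineK ?integrable_fin_num // lee_fin.
by rewrite -[fine _]/(\int[mu]_y (dot w (vec y) ^+ 2)) -moment_quad // wS0 mul0mx mxE.
Qed.

Lemma moment_dual_candidate (P : 'M[R]_n) (g : Rn R n -> 'rV[R]_n) :
  (P^T <= W)%MS -> sqintegrable_rV mu g ->
  moment (fun x => vec x)
    (fun x => vec x *m ((mpinv (frame_op mu))^T *m (P - moment (fun x => vec x) g)) + g x)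
  = P.
Proof.
move=> PW sqg; have sqx := P2_sqintegrable muW; case: muW => _ muW0 _.
rewrite moment_addr -?moment_mulmxr //; last exact: sqintegrable_rV_mulmx.
rewrite sym_penrose_mulmxK ?subrK //; first exact: trmx_moment.
  exact: mpinvP.
rewrite linearB /= addmx_sub ?eqmx_opp // (submx_trans _ sub_frame_op) //.
by rewrite trmx_moment; exact: moment_sub.
Qed.

End FrameOperator.

Section ObliqueDual.
Variables (R : realType) (n : nat).

Lemma oproj_trmx (W V : 'M[R]_n) :
  mxdirect (W + orthc V)%MS -> row_full (W + orthc V)%MS ->
  oproj V W = (oproj W V)^T.
Proof.
move=> dxWV fullWV; have capWV : (W :&: kermx V^T = 0)%MS by apply/mxdirect_addsP.
by rewrite /oproj /orthc (trmx_proj_orth capWV fullWV).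
Qed.

Lemma colappE (M : 'M[R]_n) v : colapp M v = v *m M^T.
Proof. by rewrite /colapp trmx_mul trmxK. Qed.

Lemma dual_formulaE (mu : {measure set Rn R n -> \bar R}) (M Q : 'M[R]_n)
    (g : Rn R n -> 'rV[R]_n) v u :
  sqintegrable_rV mu (fun x => vec x) -> sqintegrable_rV mu g ->
  colapp Q^T (colapp M v) + u - vint mu (fun y => dot (colapp M v) (vec y) *: g y)
  = v *m (M^T *m (Q - mxint mu (fun x => (vec x)^T *m g x))) + u.
Proof.
move=> sqx sqg; rewrite -mulmx_moment // !colappE trmxK.
by rewrite !mulmxBr !mulmxA addrAC.
Qed.

End ObliqueDual.

Unset Implicit Arguments. Set Strict Implicit. Set Printing Implicit Defensive.

Theorem proposition4p6 (R : realType) (n : nat) (W V : 'M[R]_n)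
  (mu : probability (Rn R n) R)
  (HWV : mxdirect (W + orthc V)%MS) (HWVfull : row_full (W + orthc V)%MS)
  (Hmu : P2 W mu) (Hframe : pframe W mu)
  (T : Rn R n -> Rn R n) (mT : measurable_fun setT T)
  (TWV : forall x, inS W x -> inS V (T x)) :
  (P2 V (pushforward mu T) /\
   mxint mu (fun x => (vec x)^T *m vec (T x)) = oproj W V)
  <->
  (exists h : Rn R n -> Rn R n,
     [/\ measurable_fun setT h,
         (forall x, inS W x -> inS V (h x)),
         P2 V (pushforward mu h) &
         forall x, inS W x ->
           vec (T x) =
             colapp (oproj V W) (colapp (mpinv (frame_op mu)) (vec x))
             + vec (h x)
             - vint mu (fun y =>
                 dot (colapp (mpinv (frame_op mu)) (vec x)) (vec y) *: vec (h y))]).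
Proof.
have sqx := P2_sqintegrable Hmu; have [_ muW0 _] := Hmu.
rewrite (oproj_trmx HWV HWVfull).
split => [[PT MT]|[h [mh _ Ph Th]]].
  exists T; split => // x _; have sqT := P2_pushforward_sqintegrable mT PT.
  by rewrite dual_formulaE // MT subrr !mulmx0 add0r.
have sqh := P2_pushforward_sqintegrable mh Ph.
pose G := (mpinv (frame_op mu))^T *m (oproj W V - mxint mu (fun x => (vec x)^T *m vec (h x))).
have sqG : sqintegrable_rV mu (fun x => vec x *m G + vec (h x)).
  exact: sqintegrable_rVD (sqintegrable_rV_mulmx _ sqx) sqh.
have mTx i : measurable_fun setT (fun x => vec (T x) 0 i).
  exact: measurableT_comp (measurable_vec_coord i) mT.
have TE : {in inS W, (fun x => vec (T x)) =1 (fun x => vec x *m G + vec (h x))}.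
  by move=> x /[!in_setE] xW; rewrite Th // dual_formulaE.
split.
  apply: (pushforward_P2 mT Hmu TWV).
  exact: sqintegrable_rV_conull (measurable_inS W) muW0 mTx sqG TE.
rewrite (moment_conullr (measurable_inS W) muW0 sqx mTx (fun i => (sqG i).1) TE).
apply: (moment_dual_candidate Hmu Hframe) => //.
by rewrite /oproj trmxK -[proj_mx _ _]mul1mx proj_mx_sub.
Qed.
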